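(* Let $X\subset\overline{\mathbb{R}}$ and $Y\subset[0,1]$ be finite sets with $|Y|\le|X|+1$ and $\{0,1\}\subset Y$. Let $\mathcal{F}(X,Y)$ be the set of cumulative distribution functions with atoms in $X$ and cumulative probabilities in $Y$, i.e. nondecreasing maps $F:X\to Y$ with $F(\max X)=1$ (where $F$ corresponds to the distribution assigning probability $F(x_i)-F(x_{i-1})$ to $x_i$, with $X=\{x_1<\cdots<x_{|X|}\}$ and $F(x_0):=0$). For $F\in\mathcal{F}(X,Y)$, let $H(F)$ be the Shannon entropy of this distribution. Then $F\in\arg\max_{F'\in\mathcal{F}(X,Y)}H(F')$ if and only if $F(X)\cup\{0\}=Y$.
   Context: $\overline{\mathbb{R}}=\mathbb{R}\cup\{-\infty,+\infty,\bot\}$ with the strict linear order $-\infty<x<x'<+\infty<\bot$ for reals $x<x'$. Shannon entropy of a discrete distribution $(p_i)$ is $-\sum_i p_i\log_2 p_i$ (with $0\log_2 0=0$). *)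

From mathcomp Require Import all_boot all_order all_algebra.
From mathcomp Require Import reals ereal exp.
Set Implicit Arguments. Unset Strict Implicit. Unset Printing Implicit Defensive.
Import Order.TTheory GRing.Theory Num.Theory.
Local Open Scope ring_scope.

(* \overline{R} = R ∪ {-oo, +oo, ⊥}: an extended real (\bar R) or None = ⊥. *)
Definition xbar (R : realType) := option (\bar R).

Definition xlt (R : realType) (a b : xbar R) : bool :=
  match a, b with
  | Some x, Some y => (x < y)%E
  | Some _, None => true
  | None, _ => false
  end.

(* A finite set X ⊂ \overline{R} is represented by its increasing enumeration
   x_1 < ... < x_|X|  (sorted xlt X). *)

Definition is_cdf (R : realType) (X : seq (xbar R)) (Y : seq R)
    (F : xbar R -> R) : Prop :=
  [/\ forall x, x \in X -> F x \in Y,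
      forall x y, x \in X -> y \in X -> xlt x y -> F x <= F y
    & F (last None X) = 1].

Definition atom_prob (R : realType) (X : seq (xbar R)) (F : xbar R -> R)
    (i : nat) : R :=
  F (nth None X i) - (if i is j.+1 then F (nth None X j) else 0).

Definition plog2p (R : realType) (p : R) : R :=
  if p == 0 then 0 else p * (ln p / ln 2).

Definition entropy (R : realType) (X : seq (xbar R)) (F : xbar R -> R) : R :=
  - \sum_(i < size X) plog2p (atom_prob X F i).

Definition is_argmax_entropy (R : realType) (X : seq (xbar R)) (Y : seq R)
    (F : xbar R -> R) : Prop :=
  is_cdf X Y F /\ forall F', is_cdf X Y F' -> entropy X F' <= entropy X F.

From mathcomp Require Import all_boot all_order all_algebra.
From mathcomp Require Import reals ereal exp.
From mathcomp Require Import ring.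
Import Order.TTheory GRing.Theory Num.Theory.
Local Open Scope ring_scope.

(* Listing the values of a CDF as a chain 0 <= v_1 <= ... <= v_n = 1, its
   entropy is minus the sum of plog2p over the increments of the chain.
   Since plog2p is strictly superadditive on positive reals, inserting a new
   point into the chain strictly increases the entropy, while repeated points
   contribute nothing: the entropy depends only on the set {0} ∪ F(X) and
   grows with it.  So F is maximal iff this set is all of Y, and
   |Y| <= |X| + 1 guarantees that a CDF using all of Y exists. *)

Section IncrementChains.
Context {R : realType}.
Implicit Types (a y : R) (s t : seq R).

Lemma plog2p0 : plog2p (0 : R) = 0.
Proof. by rewrite /plog2p eqxx. Qed.

Lemma plog2p_ltD (p q : R) : 0 < p -> 0 < q ->
  plog2p p + plog2p q < plog2p (p + q).
Proof.
move=> p_gt0 q_gt0; have pq_gt0 : 0 < p + q by rewrite addr_gt0.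
rewrite /plog2p (gt_eqF p_gt0) (gt_eqF q_gt0) (gt_eqF pq_gt0).
have ln2_gt0 : 0 < ln (2 : R) by rewrite ln_gt0 // ltr1n.
rewrite !mulrA -mulrDl ltr_pM2r ?invr_gt0 // mulrDl.
by rewrite ltrD // ltr_pM2l // ltr_ln ?posrE // ?ltrDl ?ltrDr.
Qed.

Lemma plog2p_leD (p q : R) : 0 <= p -> 0 <= q ->
  plog2p p + plog2p q <= plog2p (p + q).
Proof.
rewrite le_eqVlt => /predU1P[<-|p_gt0]; first by rewrite plog2p0 !add0r.
rewrite le_eqVlt => /predU1P[<-|q_gt0]; first by rewrite plog2p0 !addr0.
exact/ltW/plog2p_ltD.
Qed.

Fixpoint incr_plog2p a s : R :=
  if s is b :: s' then plog2p (b - a) + incr_plog2p b s' else 0.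

Lemma incr_plog2pE a s :
  \sum_(i < size s) plog2p (nth 0 s i - if nat_of_ord i is j.+1 then nth 0 s j else a)
  = incr_plog2p a s.
Proof.
elim: s a => [|b s IHs] a /=; first by rewrite big_ord0.
by rewrite big_ord_recl /= -IHs; congr (_ + _); apply: eq_bigr => -[[|i] ?].
Qed.

Lemma incr_plog2p_cat a s t :
  incr_plog2p a (s ++ t) = incr_plog2p a s + incr_plog2p (last a s) t.
Proof. by elim: s a => [|b s IHs] a /=; rewrite ?add0r // IHs addrA. Qed.

Lemma incr_plog2p_nseq a n : incr_plog2p a (nseq n a) = 0.
Proof. by elim: n => //= n ->; rewrite subrr plog2p0 addr0. Qed.

Lemma path_pad a s n : path <=%R a s -> path <=%R a (s ++ nseq n (last a s)).
Proof.
by rewrite cat_path => ->; elim: n => //= n ->; rewrite lexx.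
Qed.

Lemma last_pad a s n : last a (s ++ nseq n (last a s)) = last a s.
Proof. by rewrite last_cat; elim: n. Qed.

Lemma incr_plog2p_pad a s n :
  incr_plog2p a (s ++ nseq n (last a s)) = incr_plog2p a s.
Proof. by rewrite incr_plog2p_cat incr_plog2p_nseq addr0. Qed.

Lemma path_le_last a s : path <=%R a s -> {in a :: s, forall y, y <= last a s}.
Proof.
elim: s a => [|b s IHs] a /=; first by move=> _ y /[!inE] /eqP->.
case/andP=> le_ab path_bs y /[!inE] /predU1P[->|]; last exact: IHs.
by apply: le_trans le_ab (IHs _ path_bs _ (mem_head _ _)).
Qed.

Fixpoint insort y s :=
  if s is b :: s' then (if y <= b then y :: s else b :: insort y s') else [:: y].

Lemma mem_insort y s : insort y s =i y :: s.
Proof.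
move=> x; elim: s => [|b s IHs] //=; case: ifP => // _.
by rewrite !inE IHs orbCA.
Qed.

Lemma path_insort a y s : path <=%R a s -> a <= y -> path <=%R a (insort y s).
Proof.
elim: s a => [|b s IHs] a /=; first by move=> _ ->.
case/andP=> le_ab path_bs le_ay; case: ifP => [le_yb|/negbT]; first by rewrite /= le_ay le_yb.
by rewrite -ltNge => /ltW le_by; rewrite /= le_ab IHs.
Qed.

Lemma last_insort a y s : path <=%R a s -> a <= y <= last a s ->
  last a (insort y s) = last a s.
Proof.
elim: s a => [|b s IHs] a /=; first by move=> _ /andP[le_ay le_ya]; apply/le_anti/andP.
case/andP=> _ path_bs /andP[_ le_y_last]; case: ifP => [//|/negbT].
by rewrite -ltNge => /ltW le_by /=; apply: IHs; rewrite ?le_by.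
Qed.

Lemma incr_plog2p_insort a y s : path <=%R a s -> a <= y <= last a s ->
  incr_plog2p a (insort y s) <= incr_plog2p a s.
Proof.
elim: s a => [|b s IHs] a /=.
  by move=> _ /le_anti->; rewrite subrr plog2p0 addr0.
case/andP=> le_ab path_bs /andP[le_ay le_y_last]; case: ifP => [le_yb|/negbT] /=.
  rewrite addrA lerD2r (_ : b - a = (y - a) + (b - y)); last by ring.
  by rewrite plog2p_leD ?subr_ge0.
by rewrite -ltNge => /ltW le_by; rewrite lerD2l IHs ?le_by.
Qed.

Lemma incr_plog2p_insort_lt a y s : path <=%R a s -> a <= y <= last a s ->
  y \notin a :: s -> incr_plog2p a (insort y s) < incr_plog2p a s.
Proof.
elim: s a => [|b s IHs] a /=.
  by move=> _ /le_anti->; rewrite mem_head.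
case/andP=> le_ab path_bs /andP[le_ay le_y_last] /[!inE].
rewrite !negb_or => /and3P[neq_ya neq_yb y_notin_s].
case: ifP => [le_yb|/negbT] /=.
  rewrite addrA ltrD2r (_ : b - a = (y - a) + (b - y)); last by ring.
  by rewrite plog2p_ltD // subr_gt0 lt_def ?neq_ya ?le_ay // eq_sym neq_yb.
rewrite -ltNge => /ltW le_by; rewrite ltrD2l IHs ?le_by //.
by rewrite inE negb_or neq_yb.
Qed.

Fixpoint dedup a s :=
  if s is b :: s' then (if b == a then dedup a s' else b :: dedup b s') else [::].

Lemma incr_plog2p_dedup a s : incr_plog2p a (dedup a s) = incr_plog2p a s.
Proof.
elim: s a => [|b s IHs] a //=; case: eqP => [->|_] /=; last by rewrite IHs.
by rewrite IHs subrr plog2p0 add0r.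
Qed.

Lemma path_dedup a s : path <=%R a s -> path <%R a (dedup a s).
Proof.
elim: s a => [|b s IHs] a //= /andP[le_ab path_bs]; case: eqP => [eq_ba|/eqP neq_ba] /=.
  by apply: IHs; rewrite -eq_ba.
by rewrite lt_def neq_ba le_ab IHs.
Qed.

Lemma mem_dedup a s : a :: dedup a s =i a :: s.
Proof.
move=> x; elim: s a => [|b s IHs] a //=; case: eqP => [->|_].
  by rewrite IHs !inE orbA orbb.
by rewrite in_cons IHs (in_cons a).
Qed.

Lemma last_dedup a s : last a (dedup a s) = last a s.
Proof. by elim: s a => [|b s IHs] a //=; case: ifP => [/eqP->|] /=. Qed.

Lemma eq_incr_plog2p a s t : path <=%R a s -> path <=%R a t ->
  a :: s =i a :: t -> incr_plog2p a s = incr_plog2p a t.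
Proof.
move=> path_s path_t eq_st; rewrite -incr_plog2p_dedup -(incr_plog2p_dedup a t).
suff [->] : a :: dedup a s = a :: dedup a t by [].
apply: (irr_sorted_eq lt_trans ltxx); try exact: path_dedup.
by move=> x; rewrite !mem_dedup eq_st.
Qed.

Lemma incr_plog2p_refine a s t : path <=%R a s -> path <=%R a t ->
  last a s = last a t -> {subset t <= a :: s} ->
  incr_plog2p a s <= incr_plog2p a t.
Proof.
move=> path_s path_t last_st sub_ts.
(* Inserting all points of s into t yields a chain with the point set of s. *)
have insort_all ys : {in ys, forall y, a <= y <= last a t} ->
    let r := foldr insort t ys in
    [/\ path <=%R a r, last a r = last a t,
        incr_plog2p a r <= incr_plog2p a t & r =i ys ++ t].
  elim: ys => [|y ys IHys] /= bounds; first by [].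
  have [path_r last_r le_r mem_r] := IHys (sub_in1 (@mem_behead _ (y :: ys)) bounds).
  have /andP[le_ay le_y_last] := bounds y (mem_head _ _).
  split; first exact: path_insort.
  - by rewrite last_insort // le_ay last_r.
  - by apply: le_trans le_r; rewrite incr_plog2p_insort // le_ay last_r.
  - by move=> x; rewrite mem_insort !inE mem_r.
have bounds : {in s, forall y, a <= y <= last a t}.
  move=> y ys; rewrite -last_st path_le_last ?inE ?ys ?orbT // andbT.
  exact: (allP (order_path_min le_trans path_s)).
have [path_r _ le_r mem_r] := insort_all s bounds.
rewrite (eq_incr_plog2p _ _ _ path_s path_r) // => x.
rewrite !in_cons mem_r mem_cat; case: (boolP (x \in t)) => [/sub_ts|_]; last by rewrite orbF.
by rewrite in_cons => /orP[->|->]; rewrite ?orbT.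
Qed.

End IncrementChains.

Lemma xlt_trans {R : realType} : transitive (@xlt R).
Proof. by move=> [y|] [x|] [z|] //=; apply: lt_trans. Qed.

Lemma xlt_irr {R : realType} : irreflexive (@xlt R).
Proof. by case=> //= x; apply: ltxx. Qed.

Section CdfChains.
Context {R : realType} {X : seq (xbar R)} {Y : seq R}.
Hypothesis sorted_X : sorted (@xlt R) X.
Hypothesis Y01 : forall y, y \in Y -> 0 <= y <= 1.
Hypothesis X_neq0 : X != [::].

Lemma last_mapX (G : xbar R -> R) a : last a (map G X) = G (last None X).
Proof. by case: X X_neq0 => // x s _; rewrite /= last_map. Qed.

Lemma entropyE G : entropy X G = - incr_plog2p 0 (map G X).
Proof.
rewrite /entropy -incr_plog2pE size_map; congr (- _).
apply: eq_bigr => -[[|i] lt_iX] _; rewrite /atom_prob !(nth_map None) //.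
by rewrite /= (nth_map None) // ltnW.
Qed.

Lemma is_cdf_chain G : is_cdf X Y G ->
  [/\ path <=%R 0 (map G X), last 0 (map G X) = 1 & {subset map G X <= Y}].
Proof.
case=> GY G_mono G_last; split=> [||_ /mapP[x xX ->]]; last 2 first.
- by rewrite last_mapX.
- exact: GY.
case: X sorted_X X_neq0 GY G_mono => // x s sorted_xs _ GY G_mono.
rewrite /= (andP (Y01 _ (GY _ (mem_head _ _)))).1.
by apply: (homo_sorted_in G_mono) sorted_xs; apply/allP.
Qed.

Definition cdf_of_chain (w : seq R) (x : xbar R) : R := nth 0 w (index x X).

Lemma map_cdf_of_chain w : size w = size X -> map (cdf_of_chain w) X = w.
Proof.
have uniq_X := sorted_uniq xlt_trans xlt_irr sorted_X.
move=> size_w; apply: (@eq_from_nth _ 0); rewrite size_map // => i lt_iX.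
by rewrite (nth_map None) // /cdf_of_chain index_uniq.
Qed.

Lemma is_cdf_of_chain w : size w = size X -> sorted <=%R w -> last 0 w = 1 ->
  {subset w <= Y} -> is_cdf X Y (cdf_of_chain w).
Proof.
move=> size_w sorted_w last_w sub_wY; split.
- by move=> x xX; apply/sub_wY/mem_nth; rewrite size_w index_mem.
- move=> x y xX yX lt_xy; rewrite /cdf_of_chain.
  have [le_ixy|lt_iyx] := leqP (index x X) (index y X).
    by apply: (sorted_leq_nth le_trans lexx) => //; rewrite inE size_w index_mem.
  have lt_yx := sorted_ltn_index xlt_trans sorted_X _ _ yX xX lt_iyx.
  by have := xlt_trans _ _ _ lt_xy lt_yx; rewrite xlt_irr.
- by rewrite -(last_mapX _ 0) map_cdf_of_chain.
Qed.

Lemma entropy_le_of_covering F G : is_cdf X Y F -> {subset Y <= 0 :: map F X} ->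
  is_cdf X Y G -> entropy X G <= entropy X F.
Proof.
move=> /is_cdf_chain[path_F last_F _] sub_YF /is_cdf_chain[path_G last_G sub_GY].
rewrite !entropyE lerN2 incr_plog2p_refine ?last_F ?last_G //.
by move=> y /sub_GY /sub_YF.
Qed.

Lemma exists_cdf_entropy_gt F z : (size Y <= size X + 1)%N -> 0 \in Y ->
  is_cdf X Y F -> z \in Y -> z \notin 0 :: map F X ->
  exists G, is_cdf X Y G /\ entropy X F < entropy X G.
Proof.
move=> size_YX Y0 /is_cdf_chain[path_v last_v sub_vY] zY z_notin.
(* Refine the chain of F by z, drop repeated points, then pad back to length |X|. *)
have /andP[z_ge0 z_le1] := Y01 _ zY.
pose u := dedup 0 (insort z (map F X)).
have path_u : path <%R 0 u by apply/path_dedup/path_insort.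
have last_u : last 0 u = 1 by rewrite last_dedup last_insort ?last_v ?z_ge0.
have lt_u : incr_plog2p 0 u < incr_plog2p 0 (map F X).
  by rewrite incr_plog2p_dedup incr_plog2p_insort_lt ?last_v ?z_ge0.
have sub_uY : {subset 0 :: u <= Y}.
  move=> x; rewrite mem_dedup in_cons mem_insort !in_cons.
  by case/or3P=> [/eqP->|/eqP->|/sub_vY].
have size_u : (size u <= size X)%N.
  have uniq_u := @sorted_uniq _ _ lt_trans ltxx (0 :: u) path_u.
  by have := leq_trans (uniq_leq_size uniq_u sub_uY) size_YX; rewrite /= addn1 ltnS.
pose w := u ++ nseq (size X - size u) (last 0 u).
have size_w : size w = size X by rewrite size_cat size_nseq subnKC.
have path_w : path <=%R 0 w by apply/path_pad/(sub_path ltW path_u).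
have sub_wY : {subset w <= Y}.
  move=> x; rewrite mem_cat mem_nseq => /orP[xu|/andP[_ /eqP->]].
    by apply: sub_uY; rewrite in_cons xu orbT.
  exact/sub_uY/mem_last.
exists (cdf_of_chain w); split.
  by apply: is_cdf_of_chain; rewrite ?last_pad ?(path_sorted path_w).
by rewrite !entropyE map_cdf_of_chain // ltrN2 incr_plog2p_pad.
Qed.

End CdfChains.

Theorem theoremD2 (R : realType) (X : seq (xbar R)) (Y : seq R)
  (hX : sorted (@xlt R) X)
  (hYuniq : uniq Y)
  (hY01 : forall y, y \in Y -> 0 <= y <= 1)
  (hY0 : 0 \in Y) (hY1 : 1 \in Y)
  (hsize : (size Y <= size X + 1)%N)
  (F : xbar R -> R) (hF : is_cdf X Y F) :
  is_argmax_entropy X Y F <-> (0 :: [seq F x | x <- X]) =i Y.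
Proof.
have X_neq0 : X != [::].
  have Y_ge2 : (2 <= size Y)%N.
    apply: (@uniq_leq_size _ [:: 0; 1]) => [|x]; first by rewrite /= inE eq_sym oner_eq0.
    by rewrite !inE => /orP[]/eqP->.
  by apply/eqP => X0; have := leq_trans Y_ge2 hsize; rewrite X0.
have [_ _ sub_FY] := is_cdf_chain hX hY01 X_neq0 _ hF.
split=> [[_ F_max] y | F_full].
- apply/idP/idP => [/[!inE]/predU1P[->//|/sub_FY//]|yY].
  apply/negPn/negP => y_notin.
  have [G [cdf_G lt_FG]] := exists_cdf_entropy_gt hX hY01 X_neq0 _ _ hsize hY0 hF yY y_notin.
  by have := F_max G cdf_G; rewrite leNgt lt_FG.
- split=> // G cdf_G; apply: (entropy_le_of_covering hX hY01 X_neq0 _ _ hF) => // y.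
  by rewrite F_full.
Qed.
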